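(* Every element of $\widehat{\Pi}_{4/4,4}$ can be written as \[ \psi_a(z)=\frac{\left(a^4-4a^3+3a^2-\frac{2a}{3}+\frac1{24}\right)z^4+\left(-4a^3+6a^2-2a+\frac16\right)z^3+\left(6a^2-4a+\frac12\right)z^2+(1-4a)z+1}{(1-az)^4},\qquad a\in\mathbb{R}. \] Then $\widehat{R}_{4/4,4}\approx 5.167265421$, which is the third smallest real root of \[ x^9-24x^8+240x^7-1168x^6+1848x^5+7008x^4-30528x^3+7488x^2+71568x+36864=0. \] This value is attained for a unique $a=a^*\approx 0.0971331276$, namely the smallest real root of $147456a^9-546624a^8+799488a^7-601344a^6+258432a^5-66576a^4+10400a^3-960a^2+48a-1=0$.
   Context: A real rational function $\psi$ is always considered in lowest terms, as a smooth function on $\mathbb{R}$ minus its finitely many poles. It is absolutely monotonic at $x\in\mathbb{R}$ if $x$ is not a pole and $\psi^{(k)}(x)\ge 0$ for all integers $k\ge 0$. The radius of absolute monotonicity is $R(\psi)=\sup\big(\{r\in[0,\infty): \psi \text{ is absolutely monotonic at each point of } [-r,0]\}\cup\{0\}\big)\in[0,+\infty]$. $\widehat{\Pi}_{s/s,p}$ denotes the set of real rational functions $\psi(z)=P(z)/(1-az)^s$ with $P$ a real polynomial of degree at most $s$ and $a\in\mathbb{R}$, such that $\psi(z)-e^z=O(z^{p+1})$ as $z\to0$. Finally, $\widehat{R}_{s/s,p}=\sup\{R(\psi):\psi\in\widehat{\Pi}_{s/s,p}\}$. *)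

From Stdlib Require Import Reals Lra.
Open Scope R_scope.

Definition peval (s : nat) (c : nat -> R) (z : R) : R :=
  sum_f_R0 (fun i => c i * z ^ i) s.

(* psi(z) = P(z) / (1 - a z)^s, as a real function (meaningful where 1 - a z <> 0). *)
Definition psi (s : nat) (c : nat -> R) (a : R) (z : R) : R :=
  peval s c z / (1 - a * z) ^ s.

Definition inPi (s p : nat) (c : nat -> R) (a : R) : Prop :=
  (forall i, (s < i)%nat -> c i = 0) /\
  exists C delta, 0 < delta /\
    forall z, Rabs z < delta -> Rabs (psi s c a z - exp z) <= C * Rabs z ^ (p + 1).

(* Poles of P/(1-az)^s in lowest terms: x is a pole iff 1 - a x = 0 and
   (1 - a z)^s does not divide P (for deg P <= s, i.e. P is not k (1 - a z)^s). *)
Definition is_pole (s : nat) (c : nat -> R) (a x : R) : Prop :=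
  1 - a * x = 0 /\ ~ (exists k, forall z, peval s c z = k * (1 - a * z) ^ s).

(* Absolute monotonicity at x: x not a pole, and all derivatives of the smooth
   function (on R minus poles) are >= 0 at x.  d k is the k-th derivative. *)
Definition abs_mon_at (s : nat) (c : nat -> R) (a x : R) : Prop :=
  ~ is_pole s c a x /\
  exists d : nat -> R -> R,
    (forall y, 1 - a * y <> 0 -> d 0%nat y = psi s c a y) /\
    (forall k y, ~ is_pole s c a y -> derivable_pt_lim (d k) y (d (S k) y)) /\
    (forall k, 0 <= d k x).

(* The set whose supremum is R(psi). *)
Definition AM_set (s : nat) (c : nat -> R) (a : R) (r : R) : Prop :=
  (0 <= r /\ forall x, - r <= x <= 0 -> abs_mon_at s c a x) \/ r = 0.

(* Union over psi in \hat\Pi_{s/s,p} of the sets above; its sup is \hat R_{s/s,p}. *)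
Definition Rhat_set (s p : nat) (r : R) : Prop :=
  exists c a, inPi s p c a /\ AM_set s c a r.

Definition psi4coef (a : R) (i : nat) : R :=
  match i with
  | 0%nat => 1
  | 1%nat => 1 - 4 * a
  | 2%nat => 6 * a ^ 2 - 4 * a + 1 / 2
  | 3%nat => - 4 * a ^ 3 + 6 * a ^ 2 - 2 * a + 1 / 6
  | 4%nat => a ^ 4 - 4 * a ^ 3 + 3 * a ^ 2 - 2 * a / 3 + 1 / 24
  | _ => 0
  end.

Definition qpoly (x : R) : R :=
  x ^ 9 - 24 * x ^ 8 + 240 * x ^ 7 - 1168 * x ^ 6 + 1848 * x ^ 5 + 7008 * x ^ 4
  - 30528 * x ^ 3 + 7488 * x ^ 2 + 71568 * x + 36864.

Definition apoly (a : R) : R :=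
  147456 * a ^ 9 - 546624 * a ^ 8 + 799488 * a ^ 7 - 601344 * a ^ 6
  + 258432 * a ^ 5 - 66576 * a ^ 4 + 10400 * a ^ 3 - 960 * a ^ 2 + 48 * a - 1.

(* Proof outline.
   1. Comparing numerators, psi is in hat Pi_{4/4,4} iff P = P_a, the numerator of
      psi_a := psi4coef a (a quartic which is O(z^5) vanishes).
   2. For a <> 0, psi_a is a partial fraction sum in powers of 1/(1 - a y), so its
      k-th derivative psi_deriv a k has a closed form; since derivatives are unique,
      absolute monotonicity at x means psi_deriv a k x >= 0 for all k.  For a = 0,
      psi_0 is the Taylor polynomial of degree 4, which fails at x = -2.
   3. Let astar be the smallest root of apoly and x0 = Xp(astar), so that
      psi_deriv astar 0 and psi_deriv astar 1 both vanish at -x0.  All derivatives of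
      order >= 2 are positive on [-x0 - 1/20, 0]; integrating twice shows that psi_astar
      is absolutely monotonic on [-x0, 0] but not just left of -x0: its radius is x0.
   4. For a <> astar a sign certificate shows that some derivative is negative at -x0
      (orders 0 or 1) or at 0 (orders 5 or 7), so the radius is strictly smaller.
   5. Eliminating a between the two critical equations gives qpoly(x0) = 0; interval
      certificates locate the real roots of qpoly and apoly. *)

From Stdlib Require Import Reals Lra Psatz Lia List Factorial FunctionalExtensionality.
From Coquelicot Require Import Coquelicot.
Open Scope R_scope.

(* ** Interval certificates for polynomial inequalities.

   To prove p(v) > 0 for l <= v <= h we write v = m + s with m the midpoint and
   |s| <= w the half-width, expand p(m + s) in powers of s and bound every monomial
   s^i by w^i; lra then checks that the constant term dominates.  For two variables
   the mixed monomials s^i t^j are bounded likewise, and for a half-line v >= l we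
   write v = l + s with s >= 0 so that all monomials are nonnegative (similarly
   v = h - s on a half-line v <= h).  Larger ranges
   are covered by finitely many such boxes ([cover]). *)

Lemma midpoint_split l h v : l <= v <= h ->
  exists s, v = (l + h) / 2 + s /\ - ((h - l) / 2) <= s <= (h - l) / 2.
Proof. intros Hv. exists (v - (l + h) / 2). split; [ring | lra]. Qed.

Lemma lower_split l v : l <= v -> exists s, v = l + s /\ 0 <= s.
Proof. intros Hv. exists (v - l). split; [ring | lra]. Qed.

Lemma upper_split h v : v <= h -> exists s, v = h - s /\ 0 <= s.
Proof. intros Hv. exists (h - v). split; [ring | lra]. Qed.

Lemma pow_sym_bound w s n : - w <= s <= w -> - w ^ n <= s ^ n <= w ^ n.
Proof.
intros Hs. apply Rabs_le_between. rewrite <- RPow_abs.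
apply pow_incr. split; [apply Rabs_pos | apply Rabs_le_between, Hs].
Qed.

Lemma mul_sym_bound u v x y : - u <= x <= u -> - v <= y <= v -> - (u * v) <= x * y <= u * v.
Proof. intros Hx Hy. split; nra. Qed.

Ltac pow_bounds H n :=
  lazymatch n with
  | O => idtac
  | S ?m => pose proof (pow_sym_bound _ _ n H); pow_bounds H m
  end.

Ltac pow_lower H n :=
  lazymatch n with
  | O => idtac
  | S ?m => pose proof (pow_le _ n H); pow_lower H m
  end.

Ltac prod_bounds Hs Ht n m :=
  lazymatch n with
  | O => idtac
  | S ?n' =>
    let rec go k :=
      lazymatch k with
      | O => idtac
      | S ?k' =>
        pose proof (mul_sym_bound _ _ _ _ (pow_sym_bound _ _ n Hs) (pow_sym_bound _ _ k Ht)); go k'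
      end in
    go m; prod_bounds Hs Ht n' m
  end.

Ltac certify1 H n :=
  let s := fresh "s" in let Hs := fresh "Hs" in
  destruct (midpoint_split _ _ _ H) as [s [-> Hs]];
  pow_bounds Hs n; field_simplify; lra.

Ltac certify_lower H n :=
  let s := fresh "s" in let Hs := fresh "Hs" in
  destruct (lower_split _ _ H) as [s [-> Hs]];
  pow_lower Hs n; field_simplify; lra.

Ltac certify_upper H n :=
  let s := fresh "s" in let Hs := fresh "Hs" in
  destruct (upper_split _ _ H) as [s [-> Hs]];
  pow_lower Hs n; field_simplify; lra.

Ltac certify2 Ha Hx n m :=
  let s := fresh "s" in let Hs := fresh "Hs" in
  let t := fresh "t" in let Ht := fresh "Ht" in
  destruct (midpoint_split _ _ _ Ha) as [s [-> Hs]];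
  destruct (midpoint_split _ _ _ Hx) as [t [-> Ht]];
  pow_bounds Hs n; pow_bounds Ht m; prod_bounds Hs Ht n m; field_simplify; lra.

(* Split the range [l, h] of x at the points of the list pts = [l; p1; ...; h]
   and apply the tactic leaf to each piece. *)
Ltac cover x pts leaf :=
  lazymatch pts with
  | (?l :: ?h :: nil)%list =>
    let H := fresh "Hbox" in assert (H : l <= x <= h) by lra; leaf H
  | (?l :: ?m :: ?rest)%list =>
    destruct (Rle_lt_dec x m);
    [ let H := fresh "Hbox" in assert (H : l <= x <= m) by lra; leaf H
    | cover x (m :: rest)%list leaf ]
  end.


Lemma increasing_of_deriv_pos (f f' : R -> R) l h : l < h ->
  (forall c, derivable_pt_lim f c (f' c)) -> (forall c, l <= c <= h -> 0 < f' c) -> f l < f h.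
Proof.
intros Hlh Hd Hpos.
destruct (MVT_cor2 f f' l h Hlh (fun c _ => Hd c)) as [c [E Hc]].
pose proof (Hpos c ltac:(lra)). assert (0 < f' c * (h - l)) by (apply Rmult_lt_0_compat; lra). lra.
Qed.

Lemma injective_of_deriv_pos (f f' : R -> R) l h :
  (forall c, derivable_pt_lim f c (f' c)) -> (forall c, l <= c <= h -> 0 < f' c) ->
  forall x y, l <= x <= h -> l <= y <= h -> f x = f y -> x = y.
Proof.
intros Hd Hpos x y Hx Hy E.
destruct (Rtotal_order x y) as [Hlt | [Heq | Hgt]]; [exfalso | exact Heq | exfalso].
- pose proof (increasing_of_deriv_pos f f' x y Hlt Hd ltac:(intros; apply Hpos; lra)). lra.
- pose proof (increasing_of_deriv_pos f f' y x Hgt Hd ltac:(intros; apply Hpos; lra)). lra.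
Qed.

Lemma nonneg_propagates (f f' : R -> R) l h :
  (forall c, l <= c <= h -> derivable_pt_lim f c (f' c)) ->
  (forall c, l <= c <= h -> 0 <= f' c) -> 0 <= f l ->
  forall x, l <= x <= h -> 0 <= f x.
Proof.
intros Hd Hpos Hl x Hx.
destruct (Req_dec x l) as [-> | Hne]; [exact Hl|].
destruct (MVT_cor2 f f' l x ltac:(lra)) as [c [E Hc]].
- intros c Hc. apply Hd. lra.
- pose proof (Hpos c ltac:(lra)). assert (0 <= f' c * (x - l)) by (apply Rmult_le_pos; lra). lra.
Qed.

Lemma mvt_power_step (f f' : R -> R) K n : 0 <= K -> f 0 = 0 ->
  (forall c, derivable_pt_lim f c (f' c)) ->
  (forall c, Rabs c <= 1 -> Rabs (f' c) <= K * Rabs c ^ n) ->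
  forall z, Rabs z <= 1 -> Rabs (f z) <= K * Rabs z ^ S n.
Proof.
intros HK Hf0 Hd Hb z Hz.
assert (Hmid : forall c, Rabs c <= Rabs z -> Rabs (f' c) * Rabs z <= K * Rabs z ^ S n).
{ intros c Hc. pose proof (Hb c ltac:(lra)) as Hbc.
  assert (K * Rabs c ^ n <= K * Rabs z ^ n).
  { apply Rmult_le_compat_l; [exact HK|]. apply pow_incr. split; [apply Rabs_pos | exact Hc]. }
  simpl. pose proof (Rabs_pos z). nra. }
destruct (Rtotal_order z 0) as [Hlt | [-> | Hgt]].
- destruct (MVT_cor2 f f' z 0 Hlt (fun c _ => Hd c)) as [c [E Hc]].
  replace (f z) with (f' c * z) by lra.
  rewrite Rabs_mult. apply Hmid. rewrite !Rabs_left by lra. lra.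
- rewrite Hf0, Rabs_R0. simpl. rewrite Rmult_0_l, Rmult_0_r. lra.
- destruct (MVT_cor2 f f' 0 z Hgt (fun c _ => Hd c)) as [c [E Hc]].
  replace (f z) with (f' c * z) by lra.
  rewrite Rabs_mult. apply Hmid. rewrite !Rabs_right by lra. lra.
Qed.

Definition exp_taylor (n : nat) (z : R) : R := sum_f_R0 (fun i => z ^ i / INR (fact i)) n.

Lemma monomial_deriv m z :
  derivable_pt_lim (fun x => x ^ S m / INR (fact (S m))) z (z ^ m / INR (fact m)).
Proof.
replace (z ^ m / INR (fact m)) with (INR (S m) * z ^ Nat.pred (S m) / INR (fact (S m))).
- apply derivable_pt_lim_div_scal, derivable_pt_lim_pow.
- rewrite fact_simpl, mult_INR. simpl Nat.pred.
  field. split; [apply INR_fact_neq_0 | apply not_0_INR; lia].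
Qed.

Lemma exp_taylor_deriv n z : derivable_pt_lim (exp_taylor (S n)) z (exp_taylor n z).
Proof.
apply is_derive_Reals. revert z. induction n as [|n IH]; intros z.
- unfold exp_taylor. simpl. auto_derive; [auto | field].
- unfold exp_taylor at 2. cbn [sum_f_R0]. fold (exp_taylor n z).
  apply (is_derive_plus (exp_taylor (S n)) (fun x => x ^ S (S n) / INR (fact (S (S n))))).
  + exact (IH z).
  + apply is_derive_Reals, monomial_deriv.
Qed.

Lemma exp_taylor_at_0 n : exp_taylor n 0 = 1.
Proof.
induction n as [|n IH]; unfold exp_taylor in *; cbn [sum_f_R0].
- simpl. field.
- rewrite IH, pow_i by lia. unfold Rdiv. ring.
Qed.

Lemma exp_taylor_bound n z : Rabs z <= 1 -> Rabs (exp z - exp_taylor n z) <= 3 * Rabs z ^ S n.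
Proof.
revert z. induction n as [|n IH].
- apply (mvt_power_step _ exp); [lra | | |].
  + rewrite exp_taylor_at_0, exp_0. ring.
  + intros c. apply is_derive_Reals. unfold exp_taylor. simpl. auto_derive; auto; ring.
  + intros c Hc. rewrite Rabs_pos_eq by (left; apply exp_pos). simpl.
    apply Rabs_le_between in Hc.
    assert (exp c <= exp 1) by (destruct (Req_dec c 1) as [->|]; [lra | left; apply exp_increasing; lra]).
    pose proof exp_le_3. lra.
- apply (mvt_power_step _ (fun c => exp c - exp_taylor n c)); [lra | | | exact IH].
  + rewrite exp_taylor_at_0, exp_0. ring.
  + intros c. apply derivable_pt_lim_minus; [apply derivable_pt_lim_exp | apply exp_taylor_deriv].
Qed.


(* ** The family hat Pi_{4/4,4}.  Both inclusions are proved by comparing numerators: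
   a real quartic which is O(z^5) as z -> 0+ vanishes identically. *)

Lemma dominated_const_zero e M del : 0 < del ->
  (forall z, 0 < z < del -> Rabs e <= M * z) -> e = 0.
Proof.
intros Hdel H.
destruct (Req_dec e 0) as [|Hne]; [assumption | exfalso].
pose proof (Rabs_pos_lt e Hne) as He.
pose proof (Rabs_pos M) as HM.
set (z := Rmin (del / 2) (Rabs e / (2 * (Rabs M + 1)))).
assert (Hz : 0 < z) by (apply Rmin_pos; [lra | apply Rdiv_lt_0_compat; lra]).
assert (Hz1 : z <= Rabs e / (2 * (Rabs M + 1))) by apply Rmin_r.
assert (Hz2 : z <= del / 2) by apply Rmin_l.
specialize (H z ltac:(lra)).
assert (HMz : M * z <= Rabs M * z) by (apply Rmult_le_compat_r; [lra | apply RRle_abs]).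
assert (Rabs M * z * (2 * (Rabs M + 1)) <= Rabs M * Rabs e).
{ apply (Rmult_le_compat_r (2 * (Rabs M + 1))) in Hz1; [|lra].
  unfold Rdiv in Hz1. rewrite Rmult_assoc, Rinv_l, Rmult_1_r in Hz1 by lra. nra. }
nra.
Qed.

Lemma pow_le_one z n : 0 <= z <= 1 -> 0 <= z ^ n <= 1.
Proof.
intros Hz. split; [apply pow_le; lra|].
rewrite <- (pow1 n). apply pow_incr. exact Hz.
Qed.

Lemma peel_constant e (G : R -> R) K B n del : 0 < del <= 1 ->
  (forall z, 0 < z < del -> Rabs (G z) <= B) ->
  (forall z, 0 < z < del -> Rabs (e + z * G z) <= K * z ^ S n) ->
  e = 0 /\ (forall z, 0 < z < del -> Rabs (G z) <= K * z ^ n).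
Proof.
intros Hdel HG H.
assert (He : e = 0).
{ apply (dominated_const_zero e (Rabs K + B) del); [lra|].
  intros z Hz. specialize (H z Hz). specialize (HG z Hz).
  pose proof (pow_le_one z n ltac:(lra)) as Hzn.
  assert (K * z ^ S n <= Rabs K * z).
  { simpl. pose proof (RRle_abs K). pose proof (Rabs_pos K).
    apply Rle_trans with (Rabs K * (z * z ^ n));
      [apply Rmult_le_compat_r; nra | apply Rmult_le_compat_l; nra]. }
  assert (Rabs (z * G z) <= z * B) by (rewrite Rabs_mult, Rabs_pos_eq by lra; apply Rmult_le_compat_l; lra).
  replace e with ((e + z * G z) + - (z * G z)) by ring.
  pose proof (Rabs_triang (e + z * G z) (- (z * G z))). rewrite Rabs_Ropp in *. lra. }
split; [exact He|].
intros z Hz. specialize (H z Hz).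
rewrite He, Rplus_0_l, Rabs_mult, Rabs_pos_eq in H by lra. simpl in H.
apply (Rmult_le_reg_l z); lra.
Qed.

Lemma peval_shift n e z : peval (S n) e z = e 0%nat + z * peval n (fun i => e (S i)) z.
Proof.
unfold peval. rewrite decomp_sum by lia. simpl Nat.pred. f_equal.
- simpl. ring.
- rewrite scal_sum. apply sum_eq. intros i _. simpl. ring.
Qed.

Lemma peval_bound n e z : Rabs z <= 1 ->
  Rabs (peval n e z) <= sum_f_R0 (fun i => Rabs (e i)) n.
Proof.
intros Hz. unfold peval.
eapply Rle_trans; [apply sum_f_R0_triangle|].
apply sum_Rle. intros i _. rewrite Rabs_mult, <- RPow_abs.
pose proof (pow_le_one (Rabs z) i ltac:(split; [apply Rabs_pos | exact Hz])).
pose proof (Rabs_pos (e i)). nra.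
Qed.

Lemma small_poly_zero n e K del : 0 < del <= 1 ->
  (forall z, 0 < z < del -> Rabs (peval n e z) <= K * z ^ S n) ->
  forall i, (i <= n)%nat -> e i = 0.
Proof.
revert e. induction n as [|n IH]; intros e Hdel H i Hi.
- replace i with 0%nat by lia.
  apply (dominated_const_zero _ K del); [lra|]. intros z Hz.
  specialize (H z Hz). unfold peval in H. simpl in H. rewrite !Rmult_1_r in H. exact H.
- assert (Hpeel := peel_constant (e 0%nat) (peval n (fun j => e (S j))) K
                     (sum_f_R0 (fun j => Rabs (e (S j))) n) (S n) del Hdel).
  destruct Hpeel as [He0 Hrest].
  + intros z Hz. apply peval_bound. rewrite Rabs_pos_eq; lra.
  + intros z Hz. rewrite <- peval_shift. apply H, Hz.
  + destruct i as [|i]; [exact He0|].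
    apply (IH (fun j => e (S j)) Hdel Hrest i). lia.
Qed.

(* psi_a agrees with exp up to z^5: P_a(z) = (1 - a z)^4 T_4(z) - z^5 Q_a(z). *)
Definition defect_coef (a : R) (i : nat) : R :=
  match i with
  | 0%nat => - a / 6 + a ^ 2 - 2 * a ^ 3 + a ^ 4
  | 1%nat => a ^ 2 / 4 - 2 / 3 * a ^ 3 + a ^ 4 / 2
  | 2%nat => - a ^ 3 / 6 + a ^ 4 / 6
  | 3%nat => a ^ 4 / 24
  | _ => 0
  end.

Lemma psi4_numerator_defect a z :
  peval 4 (psi4coef a) z = (1 - a * z) ^ 4 * exp_taylor 4 z - z ^ 5 * peval 3 (defect_coef a) z.
Proof. unfold peval, exp_taylor, psi4coef, defect_coef. simpl. field. Qed.

Definition defect_bound (a : R) : R := sum_f_R0 (fun i => Rabs (defect_coef a i)) 3.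

(* A radius on which the denominator (1 - a z)^4 stays away from 0. *)
Definition near_radius (a : R) : R := Rmin 1 (/ (2 * (Rabs a + 1))).

Lemma near_radius_pos a : 0 < near_radius a <= 1.
Proof.
pose proof (Rabs_pos a). split; [|apply Rmin_l].
apply Rmin_pos; [lra | apply Rinv_0_lt_compat; lra].
Qed.

Lemma near_radius_denom a z : Rabs z <= near_radius a -> 1 / 2 <= 1 - a * z <= 3 / 2.
Proof.
intros Hz. pose proof (Rabs_pos a) as Ha.
assert (Hz2 : Rabs z * (2 * (Rabs a + 1)) <= 1).
{ assert (Hr : near_radius a <= / (2 * (Rabs a + 1))) by apply Rmin_r.
  apply (Rmult_le_compat_r (2 * (Rabs a + 1))) in Hr; [|lra].
  rewrite Rinv_l in Hr by lra. nra. }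
assert (Haz : Rabs (a * z) <= 1 / 2) by (rewrite Rabs_mult; pose proof (Rabs_pos z); nra).
apply Rabs_le_between in Haz. lra.
Qed.

Lemma fourth_power_between u : 1 / 2 <= u <= 3 / 2 -> 1 / 16 <= u ^ 4 <= 6.
Proof.
intros Hu. assert (1 / 4 <= u * u <= 9 / 4) by (split; nra).
replace (u ^ 4) with ((u * u) * (u * u)) by ring. split; nra.
Qed.

Lemma psi4_in_Pi a : inPi 4 4 (psi4coef a) a.
Proof.
split.
{ intros i Hi. do 5 (destruct i as [|i]; [lia|]). reflexivity. }
exists (16 * defect_bound a + 3), (near_radius a).
pose proof (near_radius_pos a) as Hrad.
split; [lra|]. intros z Hz.
assert (Hz1 : Rabs z <= 1) by lra.
pose proof (near_radius_denom a z ltac:(lra)) as Hu.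
pose proof (fourth_power_between _ Hu) as Hu4.
set (u := 1 - a * z) in *.
assert (Hinv : 0 < / u ^ 4 <= 16).
{ split; [apply Rinv_0_lt_compat; lra|].
  apply (Rmult_le_reg_l (u ^ 4)); [lra|]. rewrite Rinv_r by lra. lra. }
assert (Hdef : psi 4 (psi4coef a) a z - exp z =
   - (z ^ 5 * peval 3 (defect_coef a) z) * / u ^ 4 - (exp z - exp_taylor 4 z)).
{ unfold psi. rewrite psi4_numerator_defect. fold u. field. lra. }
pose proof (peval_bound 3 (defect_coef a) z Hz1) as HQ. fold (defect_bound a) in HQ.
pose proof (exp_taylor_bound 4 z Hz1) as HT.
rewrite Hdef. simpl Nat.add.
eapply Rle_trans; [apply Rabs_triang|]. rewrite Rabs_Ropp, Rabs_mult, Rabs_Ropp, Rabs_mult.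
rewrite (Rabs_pos_eq (/ u ^ 4)) by lra. rewrite <- RPow_abs.
assert (0 <= Rabs z ^ 5) by (apply pow_le, Rabs_pos).
assert (Rabs z ^ 5 * Rabs (peval 3 (defect_coef a) z) * / u ^ 4 <= Rabs z ^ 5 * defect_bound a * 16).
{ apply Rmult_le_compat; try lra; [apply Rmult_le_pos; [lra | apply Rabs_pos] |].
  apply Rmult_le_compat_l; lra. }
nra.
Qed.

Lemma numerator_gap_bound c a C z : 0 < z <= near_radius a ->
  Rabs (psi 4 c a z - exp z) <= C * z ^ 5 ->
  Rabs (peval 4 (fun i => c i - psi4coef a i) z) <= (6 * Rabs C + 18 + defect_bound a) * z ^ 5.
Proof.
intros Hz HC.
pose proof (near_radius_pos a) as Hrad.
assert (Hz1 : Rabs z <= 1) by (rewrite Rabs_pos_eq; lra).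
pose proof (near_radius_denom a z ltac:(rewrite Rabs_pos_eq; lra)) as Hu.
pose proof (fourth_power_between _ Hu) as Hu4.
pose proof (exp_taylor_bound 4 z Hz1) as HT. rewrite (Rabs_pos_eq z) in HT by lra.
pose proof (peval_bound 3 (defect_coef a) z Hz1) as HQ. fold (defect_bound a) in HQ.
set (u := 1 - a * z) in *.
assert (Hid : peval 4 (fun i => c i - psi4coef a i) z =
              u ^ 4 * (psi 4 c a z - exp z) + u ^ 4 * (exp z - exp_taylor 4 z)
              + z ^ 5 * peval 3 (defect_coef a) z).
{ replace (peval 4 (fun i => c i - psi4coef a i) z) with (peval 4 c z - peval 4 (psi4coef a) z)
    by (unfold peval; simpl; ring).
  rewrite psi4_numerator_defect. unfold psi. fold u. field. lra. }
rewrite Hid.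
assert (0 <= z ^ 5) by (apply pow_le; lra).
pose proof (Rabs_triang (u ^ 4 * (psi 4 c a z - exp z) + u ^ 4 * (exp z - exp_taylor 4 z))
                        (z ^ 5 * peval 3 (defect_coef a) z)).
pose proof (Rabs_triang (u ^ 4 * (psi 4 c a z - exp z)) (u ^ 4 * (exp z - exp_taylor 4 z))).
rewrite !Rabs_mult, (Rabs_pos_eq (u ^ 4)), (Rabs_pos_eq (z ^ 5)) in * by lra.
assert (u ^ 4 * Rabs (psi 4 c a z - exp z) <= 6 * (Rabs C * z ^ 5)).
{ apply Rmult_le_compat; try lra; [apply Rabs_pos|].
  eapply Rle_trans; [exact HC | apply Rmult_le_compat_r; [lra | apply RRle_abs]]. }
assert (u ^ 4 * Rabs (exp z - exp_taylor 4 z) <= 6 * (3 * z ^ 5))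
  by (apply Rmult_le_compat; try lra; apply Rabs_pos).
assert (z ^ 5 * Rabs (peval 3 (defect_coef a) z) <= z ^ 5 * defect_bound a)
  by (apply Rmult_le_compat_l; lra).
lra.
Qed.

Lemma Pi_coefficients c a : inPi 4 4 c a -> forall i, c i = psi4coef a i.
Proof.
intros [Hdeg [C [del [Hdel Hb]]]] i.
pose proof (near_radius_pos a) as Hrad.
set (del1 := Rmin del (near_radius a)).
assert (Hdel1 : 0 < del1 <= 1).
{ split; [apply Rmin_pos; lra|]. apply Rle_trans with (near_radius a); [apply Rmin_r | lra]. }
destruct (Compare_dec.le_lt_dec i 4) as [Hi | Hi].
- enough (c i - psi4coef a i = 0) by lra.
  apply (small_poly_zero 4 (fun i => c i - psi4coef a i) (6 * Rabs C + 18 + defect_bound a) del1 Hdel1);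
    [|exact Hi].
  intros z Hz. apply numerator_gap_bound.
  + split; [lra|]. apply Rle_trans with del1; [lra | apply Rmin_r].
  + assert (Hzd : Rabs z < del)
      by (rewrite Rabs_pos_eq by lra; apply Rlt_le_trans with del1; [lra | apply Rmin_l]).
    pose proof (Hb z Hzd) as Hgap. rewrite (Rabs_pos_eq z) in Hgap by lra. exact Hgap.
- rewrite Hdeg by exact Hi. do 5 (destruct i as [|i]; [lia|]). reflexivity.
Qed.


(* ** Derivatives of psi_a.  For a <> 0, psi_a is a partial fraction sum in powers of
   (1 - a y)^(-1), so all its derivatives have closed forms; absolute monotonicity
   at x then means that these closed forms are nonnegative at x. *)

Fixpoint rising (j k : nat) : R :=
  match k with
  | O => 1
  | S k' => rising j k' * INR (j + k')
  end.

Lemma inv_power_deriv a y n : 1 - a * y <> 0 ->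
  derivable_pt_lim (fun y => / (1 - a * y) ^ n) y (INR n * a / (1 - a * y) ^ S n).
Proof.
intros Hy. apply is_derive_Reals. auto_derive.
- apply pow_nonzero. exact Hy.
- destruct n as [|n].
  + simpl. field. exact Hy.
  + simpl Nat.pred. replace (1 + - (a * y)) with (1 - a * y) by ring.
    pose proof (pow_nonzero _ n Hy). simpl pow. field. auto.
Qed.

(* The k-th derivative of the partial fraction sum  sum_(j <= n) b_j (1 - a y)^(-j). *)
Definition pf_deriv (n : nat) (b : nat -> R) (a : R) (k : nat) (y : R) : R :=
  sum_f_R0 (fun j => b j * rising j k * a ^ k / (1 - a * y) ^ (j + k)) n.

Lemma pf_deriv_spec n b a k y : 1 - a * y <> 0 ->
  derivable_pt_lim (pf_deriv n b a k) y (pf_deriv n b a (S k) y).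
Proof.
intros Hy.
assert (Hterm : forall j, derivable_pt_lim (fun y => b j * rising j k * a ^ k / (1 - a * y) ^ (j + k)) y
                            (b j * rising j (S k) * a ^ S k / (1 - a * y) ^ (j + S k))).
{ intros j. unfold Rdiv.
  replace (b j * rising j (S k) * a ^ S k * / (1 - a * y) ^ (j + S k))
    with (b j * rising j k * a ^ k * (INR (j + k) * a / (1 - a * y) ^ S (j + k)))
    by (cbn [rising]; rewrite Nat.add_succ_r; simpl pow; field; split; [apply pow_nonzero |]; exact Hy).
  apply derivable_pt_lim_scal, inv_power_deriv, Hy. }
unfold pf_deriv. induction n as [|n IH]; cbn [sum_f_R0].
- apply Hterm.
- apply (derivable_pt_lim_plus (fun y => sum_f_R0 _ n) (fun y => _)); [exact IH | apply Hterm].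
Qed.

(* Partial fractions: a^4 psi_a(y) = sum_(j <= 4) pfcoef a j (1 - a y)^(-j). *)
Definition pfcoef (a : R) (j : nat) : R :=
  match j with
  | 0%nat => a ^ 4 - 4 * a ^ 3 + 3 * a ^ 2 - 2 / 3 * a + 1 / 24
  | 1%nat => 10 * a ^ 3 - 10 * a ^ 2 + 5 / 2 * a - 1 / 6
  | 2%nat => - 10 * a ^ 3 + 25 / 2 * a ^ 2 - 7 / 2 * a + 1 / 4
  | 3%nat => 5 * a ^ 3 - 7 * a ^ 2 + 13 / 6 * a - 1 / 6
  | _ => - a ^ 3 + 3 / 2 * a ^ 2 - 1 / 2 * a + 1 / 24
  end.

(* psi_deriv a k is the k-th derivative of psi_a (for a <> 0). *)
Definition psi_deriv (a : R) (k : nat) (y : R) : R :=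
  pf_deriv 4 (fun j => pfcoef a j / a ^ 4) a k y.

Lemma psi_deriv_spec a k y : 1 - a * y <> 0 ->
  derivable_pt_lim (psi_deriv a k) y (psi_deriv a (S k) y).
Proof. apply pf_deriv_spec. Qed.

Lemma psi_deriv_0 a y : a <> 0 -> 1 - a * y <> 0 -> psi_deriv a 0 y = psi 4 (psi4coef a) a y.
Proof.
intros Ha Hy. unfold psi_deriv, pf_deriv, psi, peval, psi4coef, pfcoef.
simpl. field. auto.
Qed.

(* Numerator of the k-th derivative, as a polynomial in u = 1 - a y. *)
Definition deriv_numer (k : nat) (a u : R) : R :=
  sum_f_R0 (fun j => pfcoef a j * rising j k * u ^ (4 - j)) 4.

Lemma psi_deriv_numer a k y : a <> 0 -> 1 - a * y <> 0 ->
  psi_deriv a k y = a ^ k / a ^ 4 / (1 - a * y) ^ (4 + k) * deriv_numer k a (1 - a * y).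
Proof.
intros Ha Hy. unfold psi_deriv, pf_deriv, deriv_numer. simpl sum_f_R0.
set (u := 1 - a * y) in *. rewrite !pow_add. simpl Nat.sub.
field. repeat split; try apply pow_nonzero; auto.
Qed.

Lemma derivable_local_ext f g x l del : 0 < del ->
  (forall z, Rabs (z - x) < del -> f z = g z) ->
  derivable_pt_lim f x l -> derivable_pt_lim g x l.
Proof.
intros Hdel Heq H eps Heps.
destruct (H eps Heps) as [d Hd].
assert (Hm : 0 < Rmin d del) by (apply Rmin_pos; [apply cond_pos | lra]).
exists (mkposreal _ Hm). intros h Hh Hlt. simpl in Hlt.
rewrite <- (Heq (x + h)), <- (Heq x).
- apply Hd; [exact Hh | apply Rlt_le_trans with (1 := Hlt), Rmin_l].
- rewrite Rminus_diag, Rabs_R0. lra.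
- replace (x + h - x) with h by ring. apply Rlt_le_trans with (1 := Hlt), Rmin_r.
Qed.

Lemma derivative_tower_unique (Omega : R -> Prop) (d e : nat -> R -> R) :
  (forall y, Omega y -> exists del, 0 < del /\ forall z, Rabs (z - y) < del -> Omega z) ->
  (forall y, Omega y -> d 0%nat y = e 0%nat y) ->
  (forall k y, Omega y -> derivable_pt_lim (d k) y (d (S k) y)) ->
  (forall k y, Omega y -> derivable_pt_lim (e k) y (e (S k) y)) ->
  forall k y, Omega y -> d k y = e k y.
Proof.
intros Hopen H0 Hd He k. induction k as [|k IH]; intros y Hy; [exact (H0 y Hy)|].
destruct (Hopen y Hy) as [del [Hdel Hball]].
apply (uniqueness_limite (e k) y); [|exact (He k y Hy)].
apply (derivable_local_ext (d k) _ y _ del Hdel); [|exact (Hd k y Hy)].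
intros z Hz. exact (IH z (Hball z Hz)).
Qed.

Lemma nonpole_open a y : 1 - a * y <> 0 ->
  exists del, 0 < del /\ forall z, Rabs (z - y) < del -> 1 - a * z <> 0.
Proof.
intros Hy. exists (Rabs (1 - a * y) / (Rabs a + 1)).
pose proof (Rabs_pos a). pose proof (Rabs_pos_lt _ Hy).
split; [apply Rdiv_lt_0_compat; lra|].
intros z Hz Hpole.
replace (1 - a * y) with (a * (z - y)) in Hz by lra.
rewrite Rabs_mult in Hz. pose proof (Rabs_pos (z - y)).
apply (Rmult_lt_compat_r (Rabs a + 1)) in Hz; [|lra].
unfold Rdiv in Hz. rewrite Rmult_assoc, Rinv_l, Rmult_1_r in Hz by lra. nra.
Qed.

(* P_a is never a constant multiple of (1 - a z)^4, so psi_a in lowest terms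
   has its pole exactly where 1 - a z = 0. *)
Lemma psi4_not_pure_power a : ~ (exists k, forall z, peval 4 (psi4coef a) z = k * (1 - a * z) ^ 4).
Proof.
intros [k Hk].
assert (Hk1 : k = 1) by (specialize (Hk 0); unfold peval in Hk; simpl in Hk; lra). subst k.
set (e := fun i => psi4coef a i - match i with
                                  | 0%nat => 1 | 1%nat => - 4 * a | 2%nat => 6 * a ^ 2
                                  | 3%nat => - 4 * a ^ 3 | _ => a ^ 4 end).
assert (He : forall i, (i <= 4)%nat -> e i = 0).
{ apply (small_poly_zero 4 e 0 1); [lra|]. intros z _.
  replace (peval 4 e z) with (peval 4 (psi4coef a) z - 1 * (1 - a * z) ^ 4)
    by (unfold peval, e; simpl; ring).
  rewrite Hk, Rminus_diag, Rabs_R0. lra. }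
pose proof (He 2%nat ltac:(lia)) as E2. pose proof (He 3%nat ltac:(lia)) as E3.
unfold e, psi4coef in E2, E3.
assert (Ha : a = 1 / 8) by lra. subst a. lra.
Qed.

Lemma pole_iff a y : is_pole 4 (psi4coef a) a y <-> 1 - a * y = 0.
Proof.
split; [intros [H _]; exact H|].
intros H. split; [exact H | apply psi4_not_pure_power].
Qed.

Lemma abs_mon_iff a x : a <> 0 -> 1 - a * x <> 0 ->
  (abs_mon_at 4 (psi4coef a) a x <-> forall k, 0 <= psi_deriv a k x).
Proof.
intros Ha Hx. split.
- intros [_ [d [H0 [Hd Hk]]]] k.
  assert (Hdk : d k x = psi_deriv a k x).
  { apply (derivative_tower_unique (fun y => 1 - a * y <> 0) d (psi_deriv a) (nonpole_open a));
      [| | | exact Hx].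
    + intros y Hy. rewrite H0, psi_deriv_0 by assumption. reflexivity.
    + intros k' y Hy. apply Hd. rewrite pole_iff. exact Hy.
    + intros k' y Hy. apply psi_deriv_spec, Hy. }
  rewrite <- Hdk. apply Hk.
- intros Hk. split; [rewrite pole_iff; exact Hx|].
  exists (psi_deriv a). split; [|split].
  + intros y Hy. apply psi_deriv_0; assumption.
  + intros k y Hy. apply psi_deriv_spec. rewrite <- pole_iff. exact Hy.
  + exact Hk.
Qed.

(* For a = 0, psi_0 is the Taylor polynomial T_4, whose third derivative 1 + y is
   negative at y = -2. *)
Lemma psi0_not_abs_mon : ~ abs_mon_at 4 (psi4coef 0) 0 (-2).
Proof.
intros [_ [d [H0 [Hd Hk]]]].
set (taylor_tower := fun k y => if (k <=? 4)%nat then exp_taylor (4 - k) y else 0).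
assert (HT : forall k y, derivable_pt_lim (taylor_tower k) y (taylor_tower (S k) y)).
{ intros k y. unfold taylor_tower.
  destruct (Nat.leb_spec k 4) as [Hk4 | Hk4]; destruct (Nat.leb_spec (S k) 4) as [Hk5 | Hk5];
    try lia.
  - replace (4 - k)%nat with (S (4 - S k)) by lia. apply exp_taylor_deriv.
  - replace k with 4%nat by lia. simpl. unfold exp_taylor. simpl.
    apply is_derive_Reals. auto_derive; auto; ring.
  - apply derivable_pt_lim_const. }
assert (Hd3 : d 3%nat (-2) = taylor_tower 3%nat (-2)).
{ apply (derivative_tower_unique (fun _ => True) d taylor_tower); auto.
  - intros y _. exists 1. split; auto; lra.
  - intros y _. rewrite H0 by lra. unfold taylor_tower, psi, peval, psi4coef, exp_taylor. simpl. field.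
  - intros k y _. apply Hd. rewrite pole_iff. lra. }
specialize (Hk 3%nat). rewrite Hd3 in Hk. unfold taylor_tower, exp_taylor in Hk. simpl in Hk. lra.
Qed.


(* ** Sign information on the derivatives.  The derivatives of orders 0 and 1 at -x are
   polynomials num0, num1 in (a, x) divided by positive powers of 1 + a x; those of
   order k >= 2 are governed by deriv_numer k a u, which for k >= 3 is a positive
   multiple of a cubic in k with positive Taylor coefficients at k = 3 when a is near astar. *)

(* The derivatives psi_deriv a 0 and psi_deriv a 1 at y = -x, up to the positive
   factors (1 + a x)^4 and (1 + a x)^5. *)
Definition num0 (a x : R) : R := peval 4 (psi4coef a) (- x).
Definition num1 (a x : R) : R :=
  1 - x + x ^ 2 / 2 - x ^ 3 / 6 + 5 * a * x - 5 * a * x ^ 2 + 5 / 2 * a * x ^ 3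
  + 10 * a ^ 2 * x ^ 2 - 10 * a ^ 2 * x ^ 3 + 10 * a ^ 3 * x ^ 3.

Definition num0_da (a x : R) : R :=
  4 * x - 4 * x ^ 2 + 2 * x ^ 3 - 2 / 3 * x ^ 4 + 12 * a * x ^ 2 - 12 * a * x ^ 3 + 6 * a * x ^ 4
  + 12 * a ^ 2 * x ^ 3 - 12 * a ^ 2 * x ^ 4 + 4 * a ^ 3 * x ^ 4.
Definition num1_da (a x : R) : R :=
  5 * x - 5 * x ^ 2 + 5 / 2 * x ^ 3 + 20 * a * x ^ 2 - 20 * a * x ^ 3 + 30 * a ^ 2 * x ^ 3.

Lemma num0_deriv_a x c : derivable_pt_lim (fun a => num0 a x) c (num0_da c x).
Proof. apply is_derive_Reals. unfold num0, num0_da, peval, psi4coef. simpl. auto_derive; auto; field. Qed.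

Lemma num1_deriv_a x c : derivable_pt_lim (fun a => num1 a x) c (num1_da c x).
Proof. apply is_derive_Reals. unfold num1, num1_da. auto_derive; auto; field. Qed.

Lemma psi_deriv_at_neg0 a x : a <> 0 -> 1 + a * x <> 0 ->
  psi_deriv a 0 (- x) = num0 a x / (1 + a * x) ^ 4.
Proof.
intros Ha Hx. replace (1 + a * x) with (1 - a * - x) in * by ring.
rewrite psi_deriv_0 by assumption. reflexivity.
Qed.

Lemma psi_deriv_at_neg1 a x : a <> 0 -> 1 + a * x <> 0 ->
  psi_deriv a 1 (- x) = num1 a x / (1 + a * x) ^ 5.
Proof.
intros Ha Hx. replace (1 + a * x) with (1 - a * - x) in * by ring.
rewrite psi_deriv_numer by assumption.
unfold deriv_numer, num1, rising, pfcoef. simpl. field. auto.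
Qed.

Lemma psi_deriv_at_0 a k : a <> 0 -> psi_deriv a k 0 = a ^ k / a ^ 4 * deriv_numer k a 1.
Proof.
intros Ha. rewrite psi_deriv_numer by (auto; rewrite Rmult_0_r; lra).
rewrite Rmult_0_r, Rminus_0_r, pow1. field. exact Ha.
Qed.

(* For k >= 1 the numerator is k! times a cubic polynomial in k. *)
Definition tail_numer (a u k : R) : R :=
  pfcoef a 1 * u ^ 3 + pfcoef a 2 * (k + 1) * u ^ 2 + pfcoef a 3 * ((k + 1) * (k + 2) / 2) * u
  + pfcoef a 4 * ((k + 1) * (k + 2) * (k + 3) / 6).

(* Taylor coefficients of k |-> tail_numer a u k at k = 3. *)
Definition tail_coef (a u : R) (i : nat) : R :=
  match i with
  | 0%nat => pfcoef a 1 * u ^ 3 + 4 * pfcoef a 2 * u ^ 2 + 10 * pfcoef a 3 * u + 20 * pfcoef a 4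
  | 1%nat => pfcoef a 2 * u ^ 2 + 9 / 2 * pfcoef a 3 * u + 37 / 3 * pfcoef a 4
  | 2%nat => pfcoef a 3 * u / 2 + 5 / 2 * pfcoef a 4
  | _ => pfcoef a 4 / 6
  end.

Lemma rising_0 k : rising 0 (S k) = 0.
Proof. induction k as [|k IH]; simpl in *; [ring | rewrite IH; ring]. Qed.

Lemma rising_2 k : rising 2 k = rising 1 k * (INR k + 1).
Proof.
induction k as [|k IH]; [simpl; ring|].
cbn [rising]. rewrite IH, !plus_INR, !S_INR, INR_0. ring.
Qed.

Lemma rising_3 k : rising 3 k = rising 1 k * (INR k + 1) * (INR k + 2) / 2.
Proof.
induction k as [|k IH]; [simpl; field|].
cbn [rising]. rewrite IH, !plus_INR, !S_INR, INR_0. field.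
Qed.

Lemma rising_4 k : rising 4 k = rising 1 k * (INR k + 1) * (INR k + 2) * (INR k + 3) / 6.
Proof.
induction k as [|k IH]; [simpl; field|].
cbn [rising]. rewrite IH, !plus_INR, !S_INR, INR_0. field.
Qed.

Lemma rising_pos j k : (0 < j)%nat -> 0 < rising j k.
Proof.
intros Hj. induction k as [|k IH]; simpl; [lra|].
apply Rmult_lt_0_compat; [exact IH | apply lt_0_INR; lia].
Qed.

Lemma deriv_numer_tail k a u : (1 <= k)%nat ->
  deriv_numer k a u = rising 1 k * tail_numer a u (INR k).
Proof.
intros Hk. destruct k as [|k]; [lia|].
unfold deriv_numer, tail_numer. cbn [sum_f_R0].
rewrite rising_0, rising_2, rising_3, rising_4. simpl Nat.sub. field.
Qed.

Lemma tail_numer_at_shift a u s :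
  tail_numer a u (3 + s) =
  tail_coef a u 0 + tail_coef a u 1 * s + tail_coef a u 2 * s ^ 2 + tail_coef a u 3 * s ^ 3.
Proof. unfold tail_numer, tail_coef. field. Qed.

Ltac unfold_numer := unfold deriv_numer, rising, pfcoef; simpl.

Lemma numer2_pos (a u : R) : 971/10000 <= a <= 243/2500 -> 1 <= u <= 151/100 -> 0 < deriv_numer 2 a u.
Proof.
intros Ha Hu. unfold_numer.
cover u (1 :: 251/200 :: 151/100 :: nil)%list ltac:(fun H => certify2 Ha H 3%nat 3%nat).
Qed.

Lemma tail_coef_pos (a u : R) i : 971/10000 <= a <= 243/2500 -> 1 <= u <= 151/100 -> 0 < tail_coef a u i.
Proof.
intros Ha Hu. unfold tail_coef, pfcoef.
destruct i as [|[|[|i]]].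
- cover u (1 :: 251/200 :: 553/400 :: 151/100 :: nil)%list ltac:(fun H => certify2 Ha H 3%nat 3%nat).
- cover u (1 :: 251/200 :: 151/100 :: nil)%list ltac:(fun H => certify2 Ha H 3%nat 2%nat).
- certify2 Ha Hu 3%nat 1%nat.
- certify1 Ha 3%nat.
Qed.

Lemma deriv_numer_pos_near_astar a u k : 971/10000 <= a <= 972/10000 -> 1 <= u <= 151/100 ->
  (2 <= k)%nat -> 0 < deriv_numer k a u.
Proof.
intros Ha Hu Hk.
destruct (Nat.eq_dec k 2) as [-> | Hk2]; [apply numer2_pos; lra|].
rewrite deriv_numer_tail by lia.
apply Rmult_lt_0_compat; [apply rising_pos; lia|].
assert (Hs : 3 <= INR k) by (replace 3 with (INR 3) by (simpl; ring); apply le_INR; lia).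
replace (INR k) with (3 + (INR k - 3)) by ring.
rewrite tail_numer_at_shift.
pose proof (tail_coef_pos a u 0 ltac:(lra) Hu). pose proof (tail_coef_pos a u 1 ltac:(lra) Hu).
pose proof (tail_coef_pos a u 2 ltac:(lra) Hu). pose proof (tail_coef_pos a u 3 ltac:(lra) Hu).
assert (0 <= INR k - 3) by lra.
set (s := INR k - 3) in *.
assert (0 <= s ^ 2) by (apply pow_le; lra). assert (0 <= s ^ 3) by (apply pow_le; lra).
assert (0 <= tail_coef a u 1 * s) by (apply Rmult_le_pos; lra).
assert (0 <= tail_coef a u 2 * s ^ 2) by (apply Rmult_le_pos; lra).
assert (0 <= tail_coef a u 3 * s ^ 3) by (apply Rmult_le_pos; lra).
lra.
Qed.

Lemma psi_deriv_pos_near_astar a x k : 971/10000 <= a <= 972/10000 -> 1 <= 1 - a * x <= 151/100 ->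
  (2 <= k)%nat -> 0 < psi_deriv a k x.
Proof.
intros Ha Hu Hk.
rewrite psi_deriv_numer by lra.
apply Rmult_lt_0_compat; [|apply deriv_numer_pos_near_astar; assumption].
unfold Rdiv. repeat apply Rmult_lt_0_compat; try apply Rinv_0_lt_compat; apply pow_lt; lra.
Qed.

(* Sign certificates, for a in the given ranges and x in the window
   [6459/1250, 51673/10000] = [5.1672, 5.1673] containing x0. *)
Ltac unfold_nums := unfold num0, num1, num0_da, num1_da, peval, psi4coef; cbn [sum_f_R0].

Lemma num0_neg_mid (a x : R) : 973/10000 <= a <= 19/100 -> 6459/1250 <= x <= 51673/10000 -> num0 a x < 0.
Proof.
intros Ha Hx. unfold_nums.
cover a (973/10000 :: 2873/20000 :: 19/100 :: nil)%list ltac:(fun H => certify2 H Hx 4%nat 4%nat).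
Qed.

Lemma num0_neg_high (a x : R) : 1/2 <= a <= 34/25 -> 6459/1250 <= x <= 51673/10000 -> num0 a x < 0.
Proof.
intros Ha Hx. unfold_nums.
cover a (1/2 :: 443/800 :: 243/400 :: 143/200 :: 93/100 :: 34/25 :: nil)%list
  ltac:(fun H => certify2 H Hx 4%nat 4%nat).
Qed.

Lemma num1_neg_low (a x : R) : 0 <= a <= 97/1000 -> 6459/1250 <= x <= 51673/10000 -> num1 a x < 0.
Proof.
intros Ha Hx. unfold_nums.
cover a (0 :: 97/2000 :: 291/4000 :: 679/8000 :: 291/3200 :: 3007/32000 :: 97/1000 :: nil)%list
  ltac:(fun H => certify2 H Hx 3%nat 3%nat).
Qed.

Lemma num1_neg_mid (a x : R) : 71/200 <= a <= 1/2 -> 6459/1250 <= x <= 51673/10000 -> num1 a x < 0.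
Proof. intros Ha Hx. unfold_nums. certify2 Ha Hx 3%nat 3%nat. Qed.

Lemma num1_da_pos (a x : R) : 97/1000 <= a <= 243/2500 -> 6459/1250 <= x <= 51673/10000 -> 0 < num1_da a x.
Proof. intros Ha Hx. unfold_nums. certify2 Ha Hx 2%nat 3%nat. Qed.

Lemma num0_da_neg (a x : R) : 971/10000 <= a <= 973/10000 -> 6459/1250 <= x <= 51673/10000 -> num0_da a x < 0.
Proof. intros Ha Hx. unfold_nums. certify2 Ha Hx 3%nat 4%nat. Qed.

Lemma numer5_neg_large (a : R) : 34/25 <= a -> deriv_numer 5 a 1 < 0.
Proof. intros Ha. unfold_numer. certify_lower Ha 3%nat. Qed.

Lemma numer5_pos_nonpos (a : R) : a <= 0 -> 0 < deriv_numer 5 a 1.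
Proof. intros Ha. unfold_numer. certify_upper Ha 3%nat. Qed.

Lemma numer7_neg (a : R) : 19/100 <= a <= 71/200 -> deriv_numer 7 a 1 < 0.
Proof.
intros Ha. unfold_numer.
cover a (19/100 :: 109/400 :: 71/200 :: nil)%list ltac:(fun H => certify1 H 3%nat).
Qed.


(* ** The radius of absolute monotonicity of psi_a. *)

Lemma AM_set_le_of_failure c a p : p <= 0 -> ~ abs_mon_at 4 c a p ->
  forall r, AM_set 4 c a r -> r <= - p.
Proof.
intros Hp Hfail r [[Hr Ham] | ->]; [|lra].
destruct (Rle_lt_dec r (- p)) as [H | H]; [exact H|].
exfalso. apply Hfail, Ham. lra.
Qed.

Lemma AM_set_le_of_failures c a x0 eps : 0 <= x0 -> 0 < eps ->
  (forall p, - x0 - eps <= p < - x0 -> ~ abs_mon_at 4 c a p) ->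
  forall r, AM_set 4 c a r -> r <= x0.
Proof.
intros Hx0 Heps Hfail r Hr.
destruct (Rle_lt_dec r x0) as [H | H]; [exact H | exfalso].
set (p := Rmax (- ((r + x0) / 2)) (- x0 - eps)).
assert (Hp1 : - ((r + x0) / 2) <= p) by apply Rmax_l.
assert (Hp2 : - x0 - eps <= p) by apply Rmax_r.
assert (Hp3 : p < - x0) by (apply Rmax_lub_lt; lra).
pose proof (AM_set_le_of_failure c a p ltac:(lra) (Hfail p (conj Hp2 Hp3)) r Hr). lra.
Qed.

Definition radius_below (a x0 : R) : Prop :=
  exists B, B < x0 /\ forall r, AM_set 4 (psi4coef a) a r -> r <= B.

Lemma radius_below_of_neg_deriv a x0 p k : a <> 0 -> - x0 < p <= 0 -> 1 - a * p <> 0 ->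
  psi_deriv a k p < 0 -> radius_below a x0.
Proof.
intros Ha Hp Hu HD. exists (- p). split; [lra|].
apply AM_set_le_of_failure; [lra|].
rewrite abs_mon_iff by assumption. intros Hall. specialize (Hall k). lra.
Qed.

(* By continuity, a negative derivative at -x0 also fails slightly to the right of -x0. *)
Lemma radius_below_of_neg_deriv_at a x0 k : 0 < a -> 0 < x0 ->
  psi_deriv a k (- x0) < 0 -> radius_below a x0.
Proof.
intros Ha Hx HD.
assert (Hu : 1 - a * - x0 <> 0) by nra.
assert (Hc : continuity_pt (psi_deriv a k) (- x0))
  by (apply derivable_continuous_pt; exists (psi_deriv a (S k) (- x0)); apply psi_deriv_spec, Hu).
destruct (Hc (- psi_deriv a k (- x0) / 2)) as [eta [Heta Hnear]]; [lra|].
set (p := - x0 + Rmin (eta / 2) x0).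
assert (H1 : 0 < Rmin (eta / 2) x0) by (apply Rmin_pos; lra).
assert (H2 : Rmin (eta / 2) x0 <= eta / 2) by apply Rmin_l.
assert (H3 : Rmin (eta / 2) x0 <= x0) by apply Rmin_r.
apply (radius_below_of_neg_deriv a x0 p k); [lra | unfold p; lra | unfold p; nra |].
assert (Hdist : R_dist p (- x0) < eta) by (unfold R_dist, p; rewrite Rabs_pos_eq; lra).
assert (Hne : - x0 <> p) by (unfold p; intros E; lra).
specialize (Hnear p (conj (conj I Hne) Hdist)).
simpl in Hnear. unfold R_dist in Hnear. apply Rabs_lt_between in Hnear. lra.
Qed.

Lemma radius_below_of_num0 a x0 : 0 < a -> 0 < x0 -> num0 a x0 < 0 -> radius_below a x0.
Proof.
intros Ha Hx H. apply (radius_below_of_neg_deriv_at a x0 0); [exact Ha | exact Hx|].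
rewrite psi_deriv_at_neg0 by nra. apply Rdiv_neg_pos; [exact H | apply pow_lt; nra].
Qed.

Lemma radius_below_of_num1 a x0 : 0 < a -> 0 < x0 -> num1 a x0 < 0 -> radius_below a x0.
Proof.
intros Ha Hx H. apply (radius_below_of_neg_deriv_at a x0 1); [exact Ha | exact Hx|].
rewrite psi_deriv_at_neg1 by nra. apply Rdiv_neg_pos; [exact H | apply pow_lt; nra].
Qed.

Lemma radius_below_zero x0 : 2 < x0 -> radius_below 0 x0.
Proof.
intros Hx. exists 2. split; [exact Hx|].
intros r Hr. pose proof (AM_set_le_of_failure _ _ (-2) ltac:(lra) psi0_not_abs_mon r Hr). lra.
Qed.

(* At a common zero (a, -x0) of psi_deriv a 0 and psi_deriv a 1, with a close to astar,
   all derivatives are nonnegative on [-x0, 0]: those of order >= 2 are positive, and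
   psi_deriv a 1, psi_deriv a 0 increase from the value 0 at -x0. *)
Lemma abs_mon_up_to_critical a x0 : 971/10000 <= a <= 972/10000 -> 5 <= x0 <= 517/100 ->
  num0 a x0 = 0 -> num1 a x0 = 0 -> forall x, - x0 <= x <= 0 -> abs_mon_at 4 (psi4coef a) a x.
Proof.
intros Ha Hx0 H0 H1.
assert (Hu : forall x, - x0 <= x <= 0 -> 1 <= 1 - a * x <= 151/100) by (intros x Hx; split; nra).
assert (Hu' : forall x, - x0 <= x <= 0 -> 1 - a * x <> 0) by (intros x Hx; specialize (Hu x Hx); lra).
assert (Hhigh : forall k x, (2 <= k)%nat -> - x0 <= x <= 0 -> 0 <= psi_deriv a k x)
  by (intros k x Hk Hx; left; apply psi_deriv_pos_near_astar; auto).
assert (Hd : forall k c, - x0 <= c <= 0 -> derivable_pt_lim (psi_deriv a k) c (psi_deriv a (S k) c))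
  by (intros k c Hc; apply psi_deriv_spec, Hu', Hc).
assert (Hfirst : forall x, - x0 <= x <= 0 -> 0 <= psi_deriv a 1 x).
{ apply (nonneg_propagates _ (psi_deriv a 2)); [apply Hd | intros c Hc; apply Hhigh; auto |].
  rewrite psi_deriv_at_neg1, H1 by nra. unfold Rdiv. lra. }
assert (Hzeroth : forall x, - x0 <= x <= 0 -> 0 <= psi_deriv a 0 x).
{ apply (nonneg_propagates _ (psi_deriv a 1)); [apply Hd | exact Hfirst |].
  rewrite psi_deriv_at_neg0, H0 by nra. unfold Rdiv. lra. }
intros x Hx. rewrite abs_mon_iff by (try lra; apply Hu', Hx).
intros [|[|k]]; [apply Hzeroth | apply Hfirst | apply Hhigh; [lia|]]; exact Hx.
Qed.

(* Beyond -x0 the first derivative is negative, because the second one is positive. *)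
Lemma first_deriv_neg_beyond_critical a x0 : 971/10000 <= a <= 972/10000 -> 5 <= x0 <= 517/100 ->
  num1 a x0 = 0 -> forall p, - x0 - 1/20 <= p < - x0 -> psi_deriv a 1 p < 0.
Proof.
intros Ha Hx0 H1 p Hp.
destruct (MVT_cor2 (psi_deriv a 1) (psi_deriv a 2) p (- x0) ltac:(lra)) as [c [E Hc]].
{ intros c Hc. apply psi_deriv_spec. nra. }
assert (0 < psi_deriv a 2 c) by (apply psi_deriv_pos_near_astar; [lra | split; nra | lia]).
rewrite psi_deriv_at_neg1, H1 in E by nra. unfold Rdiv in E. rewrite Rmult_0_l in E.
assert (0 < psi_deriv a 2 c * (- x0 - p)) by (apply Rmult_lt_0_compat; lra).
lra.
Qed.

Lemma critical_in_AM_set a x0 : 971/10000 <= a <= 972/10000 -> 5 <= x0 <= 517/100 ->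
  num0 a x0 = 0 -> num1 a x0 = 0 -> AM_set 4 (psi4coef a) a x0.
Proof.
intros Ha Hx0 H0 H1. left. split; [lra|].
apply abs_mon_up_to_critical; assumption.
Qed.

Lemma AM_set_le_critical a x0 : 971/10000 <= a <= 972/10000 -> 5 <= x0 <= 517/100 ->
  num1 a x0 = 0 -> forall r, AM_set 4 (psi4coef a) a r -> r <= x0.
Proof.
intros Ha Hx0 H1.
apply (AM_set_le_of_failures _ _ x0 (1/20)); [lra | lra|].
intros p Hp. rewrite abs_mon_iff by nra. intros Hall.
pose proof (first_deriv_neg_beyond_critical a x0 Ha Hx0 H1 p Hp). specialize (Hall 1%nat). lra.
Qed.

(* For a <= 0, psi_a already fails to be absolutely monotonic at 0 (or at -2 when a = 0). *)
Lemma radius_below_nonpositive a x0 : a <= 0 -> 2 < x0 -> radius_below a x0.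
Proof.
intros Ha Hx. destruct (Req_dec a 0) as [-> | Hne]; [apply radius_below_zero, Hx|].
apply (radius_below_of_neg_deriv a x0 0 5); [exact Hne | lra | rewrite Rmult_0_r; lra |].
rewrite psi_deriv_at_0 by exact Hne.
replace (a ^ 5 / a ^ 4) with a by (field; exact Hne).
pose proof (numer5_pos_nonpos a Ha). apply Rmult_neg_pos; lra.
Qed.

(* Near astar: the sign of psi_deriv a 1 (-x0) or psi_deriv a 0 (-x0) changes across astar. *)
Lemma radius_below_near_critical a astar x0 : 0 < a <= 973/10000 -> a <> astar ->
  971/10000 <= astar <= 972/10000 -> 6459/1250 <= x0 <= 51673/10000 ->
  num0 astar x0 = 0 -> num1 astar x0 = 0 -> radius_below a x0.
Proof.
intros Ha Hne Has Hx0 H0 H1.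
destruct (Rle_lt_dec a (97/1000)) as [Ha1 | Ha1].
{ apply radius_below_of_num1; [lra | lra | apply num1_neg_low; lra]. }
destruct (Rlt_le_dec a astar) as [Ha2 | Ha2].
- apply radius_below_of_num1; [lra | lra|].
  rewrite <- H1. apply (increasing_of_deriv_pos (fun a => num1 a x0) (fun c => num1_da c x0));
    [exact Ha2 | intros c; apply num1_deriv_a | intros c Hc; apply num1_da_pos; lra].
- apply radius_below_of_num0; [lra | lra|].
  assert (Hlt : astar < a) by lra.
  pose proof (increasing_of_deriv_pos (fun a => - num0 a x0) (fun c => - num0_da c x0) astar a Hlt)
    as Hinc. simpl in Hinc.
  enough (- num0 astar x0 < - num0 a x0) by lra. apply Hinc.
  + intros c. apply derivable_pt_lim_opp, num0_deriv_a.
  + intros c Hc. pose proof (num0_da_neg c x0 ltac:(lra) Hx0). lra.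
Qed.

Lemma radius_below_far_from_critical a x0 : 973/10000 < a -> 6459/1250 <= x0 <= 51673/10000 ->
  radius_below a x0.
Proof.
intros Ha Hx0.
destruct (Rle_lt_dec a (19/100)) as [Ha1 | Ha1].
{ apply radius_below_of_num0; [lra | lra | apply num0_neg_mid; lra]. }
destruct (Rle_lt_dec a (71/200)) as [Ha2 | Ha2].
{ apply (radius_below_of_neg_deriv a x0 0 7); [lra | lra | rewrite Rmult_0_r; lra |].
  rewrite psi_deriv_at_0 by lra.
  replace (a ^ 7 / a ^ 4) with (a ^ 3) by (field; lra).
  pose proof (numer7_neg a ltac:(lra)). assert (0 < a ^ 3) by (apply pow_lt; lra). nra. }
destruct (Rle_lt_dec a (1/2)) as [Ha3 | Ha3].
{ apply radius_below_of_num1; [lra | lra | apply num1_neg_mid; lra]. }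
destruct (Rle_lt_dec a (34/25)) as [Ha4 | Ha4].
{ apply radius_below_of_num0; [lra | lra | apply num0_neg_high; lra]. }
apply (radius_below_of_neg_deriv a x0 0 5); [lra | lra | rewrite Rmult_0_r; lra |].
rewrite psi_deriv_at_0 by lra.
replace (a ^ 5 / a ^ 4) with a by (field; lra).
pose proof (numer5_neg_large a ltac:(lra)). nra.
Qed.

Lemma radius_below_off_critical a astar x0 : a <> astar ->
  971/10000 <= astar <= 972/10000 -> 6459/1250 <= x0 <= 51673/10000 ->
  num0 astar x0 = 0 -> num1 astar x0 = 0 -> radius_below a x0.
Proof.
intros Hne Has Hx0 H0 H1.
destruct (Rle_lt_dec a 0) as [Ha | Ha]; [apply radius_below_nonpositive; lra|].
destruct (Rle_lt_dec a (973/10000)) as [Ha' | Ha'].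
- apply (radius_below_near_critical a astar); auto; lra.
- apply radius_below_far_from_critical; assumption.
Qed.


(* ** The critical pair (astar, x0) and the real roots of apoly and qpoly. *)

(* The critical point is an algebraic function of astar: modulo apoly,
   x0 = Xp(astar), where Xp is given below. *)
Definition Xp (a : R) : R := (24043/2) + (-466186)*a + (7243302)*a^2 + (-58314060)*a^3 + (264060900)*a^4 + (-682450128)*a^5 + (973779696)*a^6 + (-697370976)*a^7 + (193978368)*a^8.

Definition W0 (a : R) : R := (-334048966024975625/384) + (856916650279020039/8)*a + (-297252629244527984455/48)*a^2 + (894605370055860533335/4)*a^3 + (-90611552380345425545771/16)*a^4 + (106988744191610620244552)*a^5 + (-1566786976332473171128581)*a^6 + (18244224540334135278097866)*a^7 + (-343868685236839263577180401/2)*a^8 + (1327943643820391353029518016)*a^9 + (-8481379800213676106988191964)*a^10 + (45075192692566685227759097712)*a^11 + (-200158986708560485328947683156)*a^12 + (744355693508577963949719364608)*a^13 + (-2319871045433551355397237176448)*a^14 + (6054606809867969192514467182464)*a^15 + (-13202632166708312511781045876992)*a^16 + (23961567756285361631082238419456)*a^17 + (-35991870424098677537729841252864)*a^18 + (44397328377589353186316867786752)*a^19 + (-44506816721846218600222299540480)*a^20 + (35750955538177607103163339161600)*a^21 + (-22571370024741692123257655599104)*a^22 + (10899558566310157006171379761152)*a^23 + (-3866306905081736882427140849664)*a^24 + (944175179729187091459501719552)*a^25 + (-140890006120727798286372569088)*a^26 + (9601757999040428008953348096)*a^27.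
Definition W1 (a : R) : R := (13894969389397/48) + (-386043866594743/16)*a + (3664305109132855/4)*a^2 + (-42051965914160569/2)*a^3 + (326550366725897727)*a^4 + (-7280780465127914085/2)*a^5 + (30158846410076645340)*a^6 + (-189656352621163880244)*a^7 + (916827774425698967460)*a^8 + (-3428938027000897285248)*a^9 + (9935027763417809389296)*a^10 + (-22226530747040864997408)*a^11 + (38078480813968951694784)*a^12 + (-49250690391568717332864)*a^13 + (47022197057192857641984)*a^14 + (-31982771884470617175552)*a^15 + (14602905436141018229760)*a^16 + (-3998666714894720040960)*a^17 + (494991173399315742720)*a^18.

Lemma num0_at_Xp a : num0 a (Xp a) = apoly a * W0 a.
Proof. unfold num0, peval, psi4coef, apoly, Xp, W0. simpl sum_f_R0. field. Qed.

Lemma num1_at_Xp a : num1 a (Xp a) = apoly a * W1 a.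
Proof. unfold num1, apoly, Xp, W1. field. Qed.

Definition Xp_deriv (a : R) : R :=
  - 466186 + 14486604 * a - 174942180 * a ^ 2 + 1056243600 * a ^ 3 - 3412250640 * a ^ 4
  + 5842678176 * a ^ 5 - 4881596832 * a ^ 6 + 1551826944 * a ^ 7.

Lemma Xp_deriv_spec a : derivable_pt_lim Xp a (Xp_deriv a).
Proof. apply is_derive_Reals. unfold Xp, Xp_deriv. auto_derive; auto; field. Qed.

Lemma Xp_deriv_pos (a : R) : 971/10000 <= a <= 972/10000 -> 0 < Xp_deriv a.
Proof. intros Ha. unfold Xp_deriv. certify1 Ha 7%nat. Qed.

(* For astar in its bracket, x0 = Xp(astar) lies in (5.1672654212, 5.1672654214):
   Xp is increasing there and its values at the ends of the bracket are known. *)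
Lemma Xp_window (a : R) : 971331276414/10000000000000 <= a <= 971331276415/10000000000000 ->
  51672654212/10000000000 < Xp a < 51672654214/10000000000.
Proof.
intros Ha.
assert (Hends : 51672654212/10000000000 < Xp (971331276414/10000000000000) /\
                Xp (971331276415/10000000000000) < 51672654214/10000000000) by (unfold Xp; lra).
assert (Hmono : forall l h, 971/10000 <= l -> l <= h -> h <= 972/10000 -> Xp l <= Xp h).
{ intros l h Hl Hlh Hh. destruct (Req_dec l h) as [-> | Hne]; [lra|].
  left. apply (increasing_of_deriv_pos Xp Xp_deriv); [lra | exact Xp_deriv_spec|].
  intros c Hc. apply Xp_deriv_pos. lra. }
pose proof (Hmono (971331276414/10000000000000) a ltac:(lra) (proj1 Ha) ltac:(lra)).
pose proof (Hmono a (971331276415/10000000000000) ltac:(lra) (proj2 Ha) ltac:(lra)).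
lra.
Qed.

(* Elimination of a between num0 and num1 (the resultant in a is x^12 times the
   product of qpoly with a cubic positive for x > 0). *)
Definition elim0 (a x : R) : R :=
  (7862400) + (8294400) * x + (1468800) * x ^ 2 + (3398400) * x ^ 3 + (2361600) * x ^ 4 + (-1382400) * x ^ 5 + (45600) * x ^ 6 + (52800) * x ^ 7 + (-6600) * x ^ 8 + (20044800) * a * x + (-2246400) * a * x ^ 2 + (-39916800) * a * x ^ 3 + (-12384000) * a * x ^ 4 + (9907200) * a * x ^ 5 + (-705600) * a * x ^ 6 + (-302400) * a * x ^ 7 + (43200) * a * x ^ 8 + (39225600) * a ^ 2 * x ^ 2 + (52012800) * a ^ 2 * x ^ 3 + (6307200) * a ^ 2 * x ^ 4 + (-10828800) * a ^ 2 * x ^ 5 + (1137600) * a ^ 2 * x ^ 6 + (302400) * a ^ 2 * x ^ 7 + (-50400) * a ^ 2 * x ^ 8.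
Definition elim1 (a x : R) : R :=
  (-6977664) + (-4364928) * x + (5216832) * x ^ 2 + (1902528) * x ^ 3 + (-845568) * x ^ 4 + (954432) * x ^ 5 + (-317232) * x ^ 6 + (-6480) * x ^ 7 + (14904) * x ^ 8 + (-1656) * x ^ 9 + (-16606080) * a * x + (-9106560) * a * x ^ 2 + (7957440) * a * x ^ 3 + (-4907520) * a * x ^ 4 + (-6508800) * a * x ^ 5 + (2918880) * a * x ^ 6 + (-99600) * a * x ^ 7 + (-98880) * a * x ^ 8 + (12360) * a * x ^ 9 + (-13772160) * a ^ 2 * x ^ 2 + (-3611520) * a ^ 2 * x ^ 3 + (17703360) * a ^ 2 * x ^ 4 + (6379200) * a ^ 2 * x ^ 5 + (-4580640) * a ^ 2 * x ^ 6 + (321120) * a ^ 2 * x ^ 7 + (136080) * a ^ 2 * x ^ 8 + (-19440) * a ^ 2 * x ^ 9 + (-3922560) * a ^ 3 * x ^ 3 + (-5201280) * a ^ 3 * x ^ 4 + (-630720) * a ^ 3 * x ^ 5 + (1082880) * a ^ 3 * x ^ 6 + (-113760) * a ^ 3 * x ^ 7 + (-30240) * a ^ 3 * x ^ 8 + (5040) * a ^ 3 * x ^ 9.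

Lemma qpoly_elimination a x :
  qpoly x * (x ^ 3 + 12 * x ^ 2 + 36 * x + 24) = elim0 a x * num0 a x + elim1 a x * num1 a x.
Proof. unfold qpoly, elim0, elim1, num0, num1, peval, psi4coef. simpl sum_f_R0. field. Qed.

Definition apoly_deriv (r : R) : R :=
  48 - 1920 * r + 31200 * r ^ 2 - 266304 * r ^ 3 + 1292160 * r ^ 4 - 3608064 * r ^ 5
  + 5596416 * r ^ 6 - 4372992 * r ^ 7 + 1327104 * r ^ 8.

Lemma apoly_deriv_spec r : derivable_pt_lim apoly r (apoly_deriv r).
Proof. apply is_derive_Reals. unfold apoly, apoly_deriv. auto_derive; auto; ring. Qed.

Lemma apoly_continuous : continuity apoly.
Proof. intros r. apply derivable_continuous_pt. exists (apoly_deriv r). apply apoly_deriv_spec. Qed.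

Lemma apoly_bracket :
  apoly (971331276414/10000000000000) < 0 < apoly (971331276415/10000000000000).
Proof. unfold apoly. lra. Qed.

Lemma critical_pair : exists astar x0,
  971331276414/10000000000000 <= astar <= 971331276415/10000000000000 /\
  51672654212/10000000000 < x0 < 51672654214/10000000000 /\
  apoly astar = 0 /\ num0 astar x0 = 0 /\ num1 astar x0 = 0 /\ qpoly x0 = 0.
Proof.
destruct (IVT apoly (971331276414/10000000000000) (971331276415/10000000000000)
              apoly_continuous) as [astar [Has Hap]];
  [lra | apply apoly_bracket | apply apoly_bracket |].
exists astar, (Xp astar).
pose proof (Xp_window astar Has) as Hx.
assert (H0 : num0 astar (Xp astar) = 0) by (rewrite num0_at_Xp, Hap; ring).
assert (H1 : num1 astar (Xp astar) = 0) by (rewrite num1_at_Xp, Hap; ring).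
repeat split; try lra.
pose proof (qpoly_elimination astar (Xp astar)) as E. rewrite H0, H1 in E.
assert (0 < Xp astar ^ 3 + 12 * Xp astar ^ 2 + 36 * Xp astar + 24)
  by (assert (0 < Xp astar) by lra; pose proof (pow_lt _ 2 H); pose proof (pow_lt _ 3 H); lra).
nra.
Qed.

(* The sign pattern of qpoly on (-oo, 517/100]: negative, a root near -2.5048,
   positive, a root near 4.7409, negative, then the root x0; near each root qpoly
   is strictly monotone. *)
Definition qpoly_deriv (r : R) : R :=
  71568 + 14976 * r - 91584 * r ^ 2 + 28032 * r ^ 3 + 9240 * r ^ 4 - 7008 * r ^ 5
  + 1680 * r ^ 6 - 192 * r ^ 7 + 9 * r ^ 8.

Lemma qpoly_deriv_spec r : derivable_pt_lim qpoly r (qpoly_deriv r).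
Proof. apply is_derive_Reals. unfold qpoly, qpoly_deriv. auto_derive; auto; ring. Qed.

Lemma qpoly_continuous : continuity qpoly.
Proof. intros r. apply derivable_continuous_pt. exists (qpoly_deriv r). apply qpoly_deriv_spec. Qed.

Lemma qpoly_brackets :
  (qpoly (-2504789749249/1000000000000) < 0 < qpoly (-2504789749247/1000000000000)) /\
  (qpoly (4740907716123/1000000000000) < 0 < qpoly (4740907716121/1000000000000)).
Proof. unfold qpoly. lra. Qed.

Lemma qpoly_neg_below (r : R) : r <= -2504789749249/1000000000000 -> qpoly r < 0.
Proof. intros Hr. unfold qpoly. certify_upper Hr 9%nat. Qed.

Lemma qpoly_pos_mid (r : R) : -249/100 <= r <= 473/100 -> 0 < qpoly r.
Proof.
intros Hr. unfold qpoly.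
cover r (-249/100 :: -1631/800 :: -127/80 :: -909/800 :: -1457/1600 :: -137/200 :: -147/320
         :: -187/800 :: 87/400 :: 28/25 :: 117/40 :: 1531/400 :: 3423/800 :: 7207/1600 :: 591/128
         :: 473/100 :: nil)%list ltac:(fun H => certify1 H 9%nat).
Qed.

Lemma qpoly_neg_right (r : R) : 19/4 <= r <= 129/25 -> qpoly r < 0.
Proof.
intros Hr. unfold qpoly.
cover r (19/4 :: 991/200 :: 129/25 :: nil)%list ltac:(fun H => certify1 H 9%nat).
Qed.

Lemma qpoly_deriv_signs (r : R) :
  (-2504789749249/1000000000000 <= r <= -249/100 -> 0 < qpoly_deriv r) /\
  (473/100 <= r <= 19/4 -> qpoly_deriv r < 0) /\
  (129/25 <= r <= 517/100 -> 0 < qpoly_deriv r).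
Proof. unfold qpoly_deriv. repeat split; intros Hr; certify1 Hr 8%nat. Qed.

Lemma qpoly_third_root x0 : qpoly x0 = 0 -> 129/25 <= x0 <= 517/100 ->
  exists r1 r2, r1 < r2 < x0 /\ qpoly r1 = 0 /\ qpoly r2 = 0 /\
       (forall r, qpoly r = 0 -> r < x0 -> r = r1 \/ r = r2).
Proof.
intros Hq Hx0.
destruct qpoly_brackets as [B1 B2].
destruct (IVT qpoly (-2504789749249/1000000000000) (-2504789749247/1000000000000) qpoly_continuous)
  as [r1 [Hr1 Hq1]]; [lra | lra | lra |].
destruct (IVT (fun x => - qpoly x) (4740907716121/1000000000000) (4740907716123/1000000000000)
              (continuity_opp _ qpoly_continuous)) as [r2 [Hr2 Hq2]]; [lra | lra | lra |].
exists r1, r2. repeat split; try lra.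
intros r Hr Hrx.
assert (Hneg : forall c, derivable_pt_lim (fun x => - qpoly x) c (- qpoly_deriv c))
  by (intros c; apply derivable_pt_lim_opp, qpoly_deriv_spec).
destruct (Rle_lt_dec r (-2504789749249/1000000000000)) as [H1 | H1].
{ pose proof (qpoly_neg_below r H1). lra. }
destruct (Rle_lt_dec r (-249/100)) as [H2 | H2].
{ left. apply (injective_of_deriv_pos qpoly qpoly_deriv (-2504789749249/1000000000000) (-249/100));
    try lra; [exact qpoly_deriv_spec | intros c Hc; apply (proj1 (qpoly_deriv_signs c)), Hc]. }
destruct (Rle_lt_dec r (473/100)) as [H3 | H3].
{ pose proof (qpoly_pos_mid r ltac:(lra)). lra. }
destruct (Rle_lt_dec r (19/4)) as [H4 | H4].
{ right. apply (injective_of_deriv_pos _ _ (473/100) (19/4) Hneg); try lra.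
  intros c Hc. pose proof (proj1 (proj2 (qpoly_deriv_signs c)) Hc). lra. }
destruct (Rle_lt_dec r (129/25)) as [H5 | H5].
{ pose proof (qpoly_neg_right r ltac:(lra)). lra. }
exfalso. assert (r = x0); [|lra].
apply (injective_of_deriv_pos qpoly qpoly_deriv (129/25) (517/100)); try lra;
  [exact qpoly_deriv_spec | intros c Hc; apply (proj2 (proj2 (qpoly_deriv_signs c))), Hc].
Qed.

Lemma apoly_neg_below (r : R) : r <= 971/10000 -> apoly r < 0.
Proof. intros Hr. unfold apoly. certify_upper Hr 9%nat. Qed.

Lemma apoly_deriv_pos (r : R) : 971/10000 <= r <= 243/2500 -> 0 < apoly_deriv r.
Proof. intros Hr. unfold apoly_deriv. certify1 Hr 8%nat. Qed.

Lemma apoly_smallest_root astar : apoly astar = 0 -> 971/10000 <= astar <= 972/10000 ->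
  forall r, apoly r = 0 -> astar <= r.
Proof.
intros Ha Hb r Hr.
destruct (Rle_lt_dec astar r) as [H | H]; [exact H | exfalso].
destruct (Rle_lt_dec r (971/10000)) as [H1 | H1].
{ pose proof (apoly_neg_below r H1). lra. }
assert (r = astar); [|lra].
apply (injective_of_deriv_pos apoly apoly_deriv (971/10000) (243/2500)); try lra;
  [exact apoly_deriv_spec | exact apoly_deriv_pos].
Qed.


Theorem mainTheorem20 :
  (forall c a, inPi 4 4 c a ->
     exists a', forall z, 1 - a * z <> 0 -> 1 - a' * z <> 0 ->
       psi 4 c a z = psi 4 (psi4coef a') a' z) /\
  exists x0 astar : R,
    (* x0 is the third smallest real root of qpoly *)
    (qpoly x0 = 0 /\
     exists r1 r2, r1 < r2 < x0 /\ qpoly r1 = 0 /\ qpoly r2 = 0 /\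
       (forall r, qpoly r = 0 -> r < x0 -> r = r1 \/ r = r2)) /\
    Rabs (x0 - 5167265421 / 1000000000) < 1 / 1000000000 /\
    (* astar is the smallest real root of apoly *)
    (apoly astar = 0 /\ forall r, apoly r = 0 -> astar <= r) /\
    Rabs (astar - 971331276 / 10000000000) < 1 / 10000000000 /\
    (* \hat R_{4/4,4} = x0 *)
    is_lub (Rhat_set 4 4) x0 /\
    (* attained at a = astar ... *)
    inPi 4 4 (psi4coef astar) astar /\
    is_lub (AM_set 4 (psi4coef astar) astar) x0 /\
    (* ... and only there *)
    (forall c a, inPi 4 4 c a -> is_lub (AM_set 4 c a) x0 -> a = astar).
Proof.
assert (Hrep : forall c a, inPi 4 4 c a -> c = psi4coef a)
  by (intros c a H; apply functional_extensionality, Pi_coefficients, H).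
split; [intros c a H; exists a; intros z _ _; rewrite (Hrep c a H); reflexivity|].
destruct critical_pair as [astar [x0 [Has [Hx0 [Hap [H0 [H1 Hq]]]]]]].
assert (Hmem : AM_set 4 (psi4coef astar) astar x0) by (apply critical_in_AM_set; auto; lra).
assert (Hoff : forall a, a <> astar -> radius_below a x0)
  by (intros a Hne; apply (radius_below_off_critical a astar); auto; lra).
assert (Hub : forall a r, AM_set 4 (psi4coef a) a r -> r <= x0).
{ intros a r Hr. destruct (Req_dec a astar) as [-> | Hne].
  - revert r Hr. apply AM_set_le_critical; auto; lra.
  - destruct (Hoff a Hne) as [B [HB HBr]]. specialize (HBr r Hr). lra. }
exists x0, astar. split; [|split; [|split; [|split; [|split; [|split; [|split]]]]]].
- split; [exact Hq | apply qpoly_third_root; [exact Hq | lra]].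
- apply Rabs_def1; lra.
- split; [exact Hap | apply apoly_smallest_root; [exact Hap | lra]].
- apply Rabs_def1; lra.
- split.
  + intros r [c [a [Hpi Hr]]]. rewrite (Hrep c a Hpi) in Hr. exact (Hub a r Hr).
  + intros b Hb. apply Hb. exists (psi4coef astar), astar. split; [apply psi4_in_Pi | exact Hmem].
- apply psi4_in_Pi.
- split; [intros r; apply Hub | intros b Hb; apply Hb, Hmem].
- intros c a Hpi [_ Hleast]. rewrite (Hrep c a Hpi) in Hleast.
  destruct (Req_dec a astar) as [-> | Hne]; [reflexivity | exfalso].
  destruct (Hoff a Hne) as [B [HB HBr]]. specialize (Hleast B HBr). lra.
Qed.
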